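(* Let $(G,\cdot)$ be a group of nilpotence class (at most) two. For $n\in\mathbb{Z}$ define $g\circ_n h=g\cdot g^{n}\cdot h\cdot g^{-n}$, which equals $g\cdot h\cdot[g,h]^{n}$. Then $(\circ_n: n\in\mathbb{Z})$ is a brace block on $G$.
   Context: Commutator convention: $[x,y]=x y x^{-1}y^{-1}$ (so that $g^n h g^{-n}=h[h^{-1},g^n]$). A skew brace is a triple $(G,\cdot,\circ)$ where $(G,\cdot)$ and $(G,\circ)$ are groups and $g\circ(h\cdot k)=(g\circ h)\cdot g^{-1}\cdot(g\circ k)$ for all $g,h,k$. A bi-skew brace is a triple $(G,\cdot,\circ)$ such that both $(G,\cdot,\circ)$ and $(G,\circ,\cdot)$ are skew braces. A brace block on a set $G$ is a family $\mathcal{F}$ of group operations on $G$ such that $(G,\circ,\diamond)$ is a bi-skew brace for all $\circ,\diamond\in\mathcal{F}$. *)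

From Stdlib Require Import ZArith.

Definition is_group {T : Type} (mul : T -> T -> T) (one : T) (inv : T -> T) : Prop :=
  (forall x y z, mul x (mul y z) = mul (mul x y) z) /\
  (forall x, mul one x = x /\ mul x one = x) /\
  (forall x, mul x (inv x) = one /\ mul (inv x) x = one).

Definition commutator {T : Type} (mul : T -> T -> T) (inv : T -> T) (x y : T) : T :=
  mul (mul (mul x y) (inv x)) (inv y).

Definition nil_class_le2 {T : Type} (mul : T -> T -> T) (inv : T -> T) : Prop :=
  forall x y z, mul (commutator mul inv x y) z = mul z (commutator mul inv x y).

Definition zpow {T : Type} (mul : T -> T -> T) (one : T) (inv : T -> T) (g : T) (n : Z) : T :=
  match n with
  | Z0 => one
  | Zpos p => Nat.iter (Pos.to_nat p) (mul g) one
  | Zneg p => inv (Nat.iter (Pos.to_nat p) (mul g) one)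
  end.

Definition circ_n {T : Type} (mul : T -> T -> T) (one : T) (inv : T -> T) (n : Z) (g h : T) : T :=
  mul g (mul (mul (zpow mul one inv g n) h) (zpow mul one inv g (- n))).

Definition is_identity {T : Type} (op : T -> T -> T) (e : T) : Prop :=
  forall x, op e x = x /\ op x e = x.

Definition is_group_op {T : Type} (op : T -> T -> T) : Prop :=
  (forall x y z, op x (op y z) = op (op x y) z) /\
  exists e, is_identity op e /\ forall x, exists y, op x y = e /\ op y x = e.

Definition is_inverse {T : Type} (op : T -> T -> T) (g gi : T) : Prop :=
  exists e, is_identity op e /\ op g gi = e /\ op gi g = e.

Definition skew_brace {T : Type} (dot circ : T -> T -> T) : Prop :=
  is_group_op dot /\ is_group_op circ /\
  forall g h k gi, is_inverse dot g gi ->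
    circ g (dot h k) = dot (dot (circ g h) gi) (circ g k).

Definition bi_skew_brace {T : Type} (dot circ : T -> T -> T) : Prop :=
  skew_brace dot circ /\ skew_brace circ dot.

Definition brace_block {T I : Type} (F : I -> T -> T -> T) : Prop :=
  (forall i, is_group_op (F i)) /\
  forall i j, bi_skew_brace (F i) (F j).

(** In a group of class two every commutator is central and [(x, y) |-> [x,y]^n]
    is an alternating bicharacter with central values, trivial on the centre;
    conjugating by [g^n] gives [g^n h g^-n = h [g,h]^n], so [o_n] is the twist
    [x o y = x y P(x,y)] of the group law by such a bicharacter [P].  Any such
    twist is a group law (the triple product is [x y z P(x,y) P(x,z) P(y,z)]
    for either bracketing) with the same identity and inverses, and for two
    such bicharacters [P], [Q] both sides of the skew brace identity for
    [(o_P, o_Q)] expand to [g h k Q(g,h) Q(g,k) P(h,k)]. *)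

From Stdlib Require Import ZArith FunctionalExtensionality.

Declare Scope group_scope.

Section Group.

Variables (T : Type) (mul : T -> T -> T) (one : T) (inv : T -> T).
Hypothesis mul_group : is_group mul one inv.

Local Notation "x * y" := (mul x y) : group_scope.
Local Notation "1" := one : group_scope.
Local Notation "x ^-1" := (inv x) (at level 3, left associativity, format "x ^-1") : group_scope.
Local Notation "x ^+ k" := (Nat.iter k (mul x) one) (at level 30, right associativity) : group_scope.
Local Notation "x ^ n" := (zpow mul one inv x n) : group_scope.
Local Notation "[~ x , y ]" := (commutator mul inv x y) : group_scope.
Local Open Scope group_scope.

Lemma mulgA x y z : x * (y * z) = x * y * z.
Proof. exact (proj1 mul_group x y z). Qed.

Lemma mul1g x : 1 * x = x.
Proof. exact (proj1 (proj1 (proj2 mul_group) x)). Qed.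

Lemma mulg1 x : x * 1 = x.
Proof. exact (proj2 (proj1 (proj2 mul_group) x)). Qed.

Lemma mulgV x : x * x^-1 = 1.
Proof. exact (proj1 (proj2 (proj2 mul_group) x)). Qed.

Lemma mulVg x : x^-1 * x = 1.
Proof. exact (proj2 (proj2 (proj2 mul_group) x)). Qed.

Lemma mulgK x y : x * y * y^-1 = x.
Proof. now rewrite <- mulgA, mulgV, mulg1. Qed.

Lemma mulgKV x y : x * y^-1 * y = x.
Proof. now rewrite <- mulgA, mulVg, mulg1. Qed.

Lemma invg_uniq x y : x * y = 1 -> y = x^-1.
Proof. intros Hxy. now rewrite <- (mul1g y), <- (mulVg x), <- mulgA, Hxy, mulg1. Qed.

Lemma invMg x y : (x * y)^-1 = y^-1 * x^-1.
Proof. symmetry; apply invg_uniq. now rewrite mulgA, mulgK, mulgV. Qed.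

Lemma invgK x : x^-1^-1 = x.
Proof. symmetry; apply invg_uniq, mulVg. Qed.

Lemma invg1 : 1^-1 = 1.
Proof. symmetry; apply invg_uniq, mul1g. Qed.

Definition central (c : T) : Prop := forall z, c * z = z * c.

Lemma central1 : central 1.
Proof. intros z. now rewrite mul1g, mulg1. Qed.

Lemma centralM a b : central a -> central b -> central (a * b).
Proof. intros Ha Hb z. now rewrite <- mulgA, Hb, mulgA, Ha, mulgA. Qed.

Lemma centralV a : central a -> central a^-1.
Proof.
  intros Ha z. rewrite <- (invgK z) at 1 2.
  now rewrite <- !invMg, Ha.
Qed.

Lemma central_slide c x y : central c -> x * c * y = x * y * c.
Proof. intros Hc. now rewrite <- mulgA, Hc, mulgA. Qed.

Lemma npow_commute a k : a * a^+k = a^+k * a.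
Proof.
  induction k as [|k IHk]; simpl.
  - now rewrite mul1g, mulg1.
  - now rewrite <- mulgA, <- IHk.
Qed.

Lemma npowV a k : a^-1^+k = (a^+k)^-1.
Proof.
  induction k as [|k IHk]; simpl.
  - now rewrite invg1.
  - now rewrite IHk, <- invMg, npow_commute.
Qed.

Lemma npow1 k : 1^+k = 1.
Proof. induction k as [|k IHk]; simpl; now rewrite ?IHk, ?mul1g. Qed.

Lemma central_npow a k : central a -> central (a^+k).
Proof. intros Ha. induction k; simpl; auto using central1, centralM. Qed.

Lemma npowM a b k : central b -> (a * b)^+k = a^+k * b^+k.
Proof.
  intros Hb. induction k as [|k IHk]; simpl.
  - now rewrite mul1g.
  - now rewrite IHk, !mulgA, (central_slide b).
Qed.

Lemma zpow1 n : 1^n = 1.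
Proof. destruct n; simpl; now rewrite ?npow1, ?invg1. Qed.

Lemma central_zpow a n : central a -> central (a^n).
Proof. intros Ha. destruct n; simpl; auto using central1, central_npow, centralV. Qed.

Lemma zpowM a b n : central b -> (a * b)^n = a^n * b^n.
Proof.
  intros Hb. destruct n; simpl; rewrite ?npowM by exact Hb.
  - now rewrite mul1g.
  - reflexivity.
  - rewrite invMg. apply centralV, central_npow, Hb.
Qed.

Record alt_bichar (P : T -> T -> T) : Prop := {
  bichar_central : forall x y, central (P x y);
  bicharMl : forall x y z, P (x * y) z = P x z * P y z;
  bicharMr : forall x y z, P x (y * z) = P x y * P x z;
  bichar_alt : forall x, P x x = 1;
  bichar_central_r : forall x c, central c -> P x c = 1 }.

Arguments bichar_central {P}.
Arguments bicharMl {P}.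
Arguments bicharMr {P}.
Arguments bichar_alt {P}.
Arguments bichar_central_r {P}.

Definition twisted_mul (P : T -> T -> T) (x y : T) : T := x * y * P x y.

Section Bichar.

Variable P : T -> T -> T.
Hypothesis P_bichar : alt_bichar P.

Lemma bicharC x y : P y x = (P x y)^-1.
Proof.
  apply invg_uniq.
  pose proof (bichar_alt P_bichar (x * y)) as Hxy.
  rewrite (bicharMl P_bichar), !(bicharMr P_bichar), !(bichar_alt P_bichar), mul1g, mulg1 in Hxy.
  exact Hxy.
Qed.

Lemma bichar_central_l c x : central c -> P c x = 1.
Proof. intros Hc. now rewrite bicharC, (bichar_central_r P_bichar), invg1. Qed.

Lemma bicharVr x y : P x y^-1 = (P x y)^-1.
Proof.
  apply invg_uniq.
  now rewrite <- (bicharMr P_bichar), mulgV, (bichar_central_r P_bichar) by exact central1.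
Qed.

Lemma bicharVl x y : P x^-1 y = (P x y)^-1.
Proof. now rewrite bicharC, bicharVr, (bicharC y x), invgK. Qed.

Lemma bichar_twistl Q x y z : alt_bichar Q -> P (twisted_mul Q x y) z = P x z * P y z.
Proof.
  intros HQ. unfold twisted_mul.
  rewrite !(bicharMl P_bichar), (bichar_central_l (Q x y)), mulg1 by exact (bichar_central HQ x y).
  reflexivity.
Qed.

Lemma bichar_twistr Q x y z : alt_bichar Q -> P z (twisted_mul Q x y) = P z x * P z y.
Proof. intros HQ. now rewrite bicharC, bichar_twistl, invMg, <- !bicharC, (bichar_central P_bichar). Qed.

Lemma twisted_mul3l x y z :
  twisted_mul P (twisted_mul P x y) z = x * y * z * (P x y * P x z * P y z).
Proof.
  unfold twisted_mul at 1. rewrite bichar_twistl by exact P_bichar. unfold twisted_mul.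
  rewrite (central_slide (P x y)) by apply (bichar_central P_bichar).
  now rewrite !mulgA.
Qed.

Lemma twisted_mul3r x y z :
  twisted_mul P x (twisted_mul P y z) = x * y * z * (P x y * P x z * P y z).
Proof.
  unfold twisted_mul at 1. rewrite bichar_twistr by exact P_bichar. unfold twisted_mul.
  now rewrite !mulgA, !(central_slide (P y z)) by apply (bichar_central P_bichar).
Qed.

Lemma twisted_mulA x y z :
  twisted_mul P x (twisted_mul P y z) = twisted_mul P (twisted_mul P x y) z.
Proof. now rewrite twisted_mul3l, twisted_mul3r. Qed.

Lemma twisted_mul1g x : twisted_mul P 1 x = x.
Proof. unfold twisted_mul. now rewrite bichar_central_l, mul1g, mulg1 by exact central1. Qed.

Lemma twisted_mulg1 x : twisted_mul P x 1 = x.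
Proof. unfold twisted_mul. now rewrite (bichar_central_r P_bichar), !mulg1 by exact central1. Qed.

Lemma twisted_mulgV x : twisted_mul P x x^-1 = 1.
Proof. unfold twisted_mul. now rewrite bicharVr, (bichar_alt P_bichar), invg1, mulgV, mulg1. Qed.

Lemma twisted_mulVg x : twisted_mul P x^-1 x = 1.
Proof. unfold twisted_mul. now rewrite bicharVl, (bichar_alt P_bichar), invg1, mulVg, mulg1. Qed.

Lemma twisted_mul_group : is_group_op (twisted_mul P).
Proof.
  split; [exact twisted_mulA |].
  exists 1. split.
  - intros x. split; [apply twisted_mul1g | apply twisted_mulg1].
  - intros x. exists x^-1. split; [apply twisted_mulgV | apply twisted_mulVg].
Qed.

Lemma twisted_inverse g gi : is_inverse (twisted_mul P) g gi -> gi = g^-1.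
Proof.
  intros [e [He [Hggi _]]].
  assert (He1 : e = 1) by (rewrite <- (twisted_mulg1 e); apply He).
  rewrite He1 in Hggi.
  now rewrite <- (twisted_mul1g gi), <- (twisted_mulVg g), <- twisted_mulA, Hggi, twisted_mulg1.
Qed.

End Bichar.

Lemma twisted_mul_skew_brace P Q :
  alt_bichar P -> alt_bichar Q -> skew_brace (twisted_mul P) (twisted_mul Q).
Proof.
  intros HP HQ.
  split; [exact (twisted_mul_group P HP) | split; [exact (twisted_mul_group Q HQ) |]].
  intros g h k gi Hgi. rewrite (twisted_inverse P HP g gi Hgi).
  set (a := twisted_mul Q g h). set (c := twisted_mul Q g k).
  rewrite twisted_mul3l by exact HP.
  assert (Hprod : a * g^-1 * c = g * h * k * (Q g h * Q g k)).
  { unfold a, c, twisted_mul.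
    rewrite !mulgA, !(central_slide (Q g h)), mulgKV by apply (bichar_central HQ).
    now rewrite (central_slide (Q g k)) by apply (bichar_central HQ). }
  assert (HPab : P a g^-1 = (P h g)^-1).
  { unfold a. now rewrite bichar_twistl, !bicharVr, (bichar_alt HP), invg1, mul1g by assumption. }
  assert (HPac : P a c = P g k * (P h g * P h k)).
  { unfold a, c. now rewrite bichar_twistl, !bichar_twistr, (bichar_alt HP), mul1g by assumption. }
  assert (HPbc : P g^-1 c = (P g k)^-1).
  { unfold c. now rewrite bicharVl, bichar_twistr, (bichar_alt HP), mul1g by assumption. }
  assert (HPtw : P a g^-1 * P a c * P g^-1 c = P h k).
  { rewrite HPab, HPac, HPbc, !mulgA, !(central_slide (P g k)) by apply (bichar_central HP).
    now rewrite mulgKV, mulVg, mul1g. }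
  rewrite Hprod, HPtw. unfold twisted_mul at 1.
  rewrite (bichar_twistr Q HQ P h k g HP). unfold twisted_mul.
  now rewrite !mulgA, !(central_slide (P h k)) by apply (bichar_central HP).
Qed.

Lemma twisted_mul_brace_block (I : Type) (F : I -> T -> T -> T) :
  (forall i, alt_bichar (F i)) -> brace_block (fun i => twisted_mul (F i)).
Proof.
  intros HF. split.
  - intros i. exact (twisted_mul_group (F i) (HF i)).
  - intros i j. split; apply twisted_mul_skew_brace; apply HF.
Qed.

Lemma conjg_commutator x y : x * y * x^-1 = [~x, y] * y.
Proof. unfold commutator. now rewrite mulgKV. Qed.

Lemma commgC x y : [~y, x] = [~x, y]^-1.
Proof.
  apply invg_uniq. unfold commutator.
  now rewrite !mulgA, !mulgKV, mulgK, mulgV.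
Qed.

Lemma commg_central_r x c : central c -> [~x, c] = 1.
Proof. intros Hc. unfold commutator. now rewrite <- (Hc x), mulgK, mulgV. Qed.

Lemma commgg x : [~x, x] = 1.
Proof. unfold commutator. now rewrite mulgK, mulgV. Qed.

Section ClassTwo.

Hypothesis class_two : nil_class_le2 mul inv.

Lemma central_commutator x y : central [~x, y].
Proof. intros z. apply class_two. Qed.

Lemma commMg x y z : [~x * y, z] = [~x, z] * [~y, z].
Proof.
  transitivity (x * (y * z * y^-1) * x^-1 * z^-1).
  { unfold commutator. now rewrite invMg, !mulgA. }
  rewrite (conjg_commutator y z), mulgA, <- (central_commutator y z x), <- (central_commutator y z).
  unfold commutator. now rewrite !mulgA.
Qed.

Lemma commgM x y z : [~x, y * z] = [~x, y] * [~x, z].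
Proof. now rewrite commgC, commMg, invMg, <- !commgC, central_commutator. Qed.

Lemma commVg x y : [~x^-1, y] = [~x, y]^-1.
Proof.
  apply invg_uniq. rewrite central_commutator, <- commMg, mulVg, commgC.
  rewrite commg_central_r, invg1 by exact central1. reflexivity.
Qed.

Lemma conjg_npow g h k : g^+k * h * (g^+k)^-1 = h * [~g, h]^+k.
Proof.
  induction k as [|k IHk]; simpl.
  - now rewrite invg1, mul1g, !mulg1.
  - transitivity (g * (g^+k * h * (g^+k)^-1) * g^-1).
    { now rewrite invMg, !mulgA. }
    rewrite IHk, mulgA, (central_slide ([~g, h]^+k)) by apply central_npow, central_commutator.
    now rewrite conjg_commutator, (central_commutator g h h), !mulgA.
Qed.

Lemma conjg_zpow g h n : g^n * h * g^(- n) = h * [~g, h]^n.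
Proof.
  destruct n as [|p|p]; simpl.
  - now rewrite mul1g, !mulg1.
  - apply conjg_npow.
  - set (k := Pos.to_nat p). rewrite <- (invgK (g^+k)) at 2. rewrite <- (npowV g k), conjg_npow.
    now rewrite commVg, npowV.
Qed.

Lemma circ_nE n g h : circ_n mul one inv n g h = g * h * [~g, h]^n.
Proof. unfold circ_n. now rewrite conjg_zpow, mulgA. Qed.

Lemma commutator_zpow_bichar n : alt_bichar (fun x y => [~x, y]^n).
Proof.
  split.
  - intros x y. apply central_zpow, central_commutator.
  - intros x y z. now rewrite commMg, zpowM by apply central_commutator.
  - intros x y z. now rewrite commgM, zpowM by apply central_commutator.
  - intros x. now rewrite commgg, zpow1.
  - intros x c Hc. now rewrite commg_central_r, zpow1.
Qed.

End ClassTwo.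

End Group.

Theorem mainTheorem8 (T : Type) (mul : T -> T -> T) (one : T) (inv : T -> T) :
  is_group mul one inv ->
  nil_class_le2 mul inv ->
  (forall (n : Z) (g h : T),
      circ_n mul one inv n g h =
      mul (mul g h) (zpow mul one inv (commutator mul inv g h) n)) /\
  brace_block (fun n : Z => circ_n mul one inv n).
Proof.
  intros Hgroup Hclass. split.
  - exact (circ_nE T mul one inv Hgroup Hclass).
  - replace (fun n => circ_n mul one inv n)
      with (fun n => twisted_mul T mul (fun x y => zpow mul one inv (commutator mul inv x y) n)).
    + apply (twisted_mul_brace_block T mul one inv Hgroup). intros n.
      exact (commutator_zpow_bichar T mul one inv Hgroup Hclass n).
    + extensionality n. extensionality g. extensionality h.
      symmetry. exact (circ_nE T mul one inv Hgroup Hclass n g h).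
Qed.
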